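(* Let $G$ be a finite abelian group with $|G|>1$ and let $p(G)$ be the smallest prime dividing $|G|$. If $B\subset G$ is balanced, then $|B|\geqslant\log_2 p(G)+1$.
   Context: A set $B\subset G$ is balanced if for every $b\in B$ there exist distinct $b_1,b_2\in B$ with $2b=b_1+b_2$. *)

From mathcomp Require Import all_boot all_algebra.
From Stdlib Require Import Reals.
Set Implicit Arguments. Unset Strict Implicit. Unset Printing Implicit Defensive.
Import GRing.Theory.
Local Open Scope ring_scope.

Definition balanced (G : finZmodType) (B : {set G}) : Prop :=
  forall b, b \in B ->
    exists b1 b2, [/\ b1 \in B, b2 \in B, b1 != b2 & b *+ 2 = b1 + b2].

Definition log2 (x : R) : R := (ln x / ln 2)%R.

From mathcomp Require Import all_boot all_order all_algebra.
From mathcomp Require Import all_fingroup all_solvable.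
From mathcomp.algebra_tactics Require Import ring lra.
Import Order.TTheory GRing.Theory Num.Theory.
Set Implicit Arguments. Unset Strict Implicit. Unset Printing Implicit Defensive.
Local Open Scope ring_scope.

(* Shrink B to a minimal nonempty balanced set S and fix r in S.  Choosing
   2 s = s1 + s2 for every s in S, the vector (s - r)_{s in S} lies in the
   kernel of the integer matrix D whose row s is 2 e_s - e_s1 - e_s2 (and e_r
   for s = r), so det D annihilates every s - r, at least one of which is
   nonzero: p(G) <= |det D|.  Minimality makes D nonsingular through a maximum
   principle, and D is a diagonally dominant Z-matrix, so its determinant is at
   most the product of its diagonal entries, 2^(|S| - 1). *)

Section DominantZmatrix.
Variable R : realFieldType.

Definition dominant_Zmx n (A : 'M[R]_n) :=
  (forall i j, i != j -> A i j <= 0) /\ (forall i, 0 <= \sum_j A i j).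

Lemma dominant_Zmx_diag_ge0 n (A : 'M[R]_n) i : dominant_Zmx A -> 0 <= A i i.
Proof.
case=> A_off A_row; have := A_row i; rewrite (bigD1 i) //=.
have : \sum_(j | j != i) A i j <= 0.
  by apply: sumr_le0 => j ji; apply: A_off; rewrite eq_sym.
lra.
Qed.

Lemma dominant_Zmx_row_eq0 n (A : 'M[R]_n) i j :
  dominant_Zmx A -> A i i = 0 -> A i j = 0.
Proof.
move=> [A_off A_row] Aii0; have [<- //|ij] := eqVneq i j.
have := A_row i; rewrite (bigD1 i) //= Aii0 add0r (bigD1 j) 1?eq_sym //=.
have : \sum_(k | (k != i) && (k != j)) A i k <= 0.
  by apply: sumr_le0 => k /andP[ki _]; apply: A_off; rewrite eq_sym.
have := A_off i j ij; lra.
Qed.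

Definition schur n (A : 'M[R]_(1 + n)) : 'M[R]_n :=
  drsubmx A - (A ord0 ord0)^-1 *: (dlsubmx A *m ursubmx A).

Lemma schurE n (A : 'M[R]_n.+1) i j :
  schur A i j = A (lift ord0 i) (lift ord0 j)
    - (A ord0 ord0)^-1 * (A (lift ord0 i) ord0 * A ord0 (lift ord0 j)).
Proof. by rewrite !mxE big_ord1 !mxE lshift0 -!rshift1. Qed.

Lemma det_schur n (A : 'M[R]_n.+1) :
  A ord0 ord0 != 0 -> \det A = A ord0 ord0 * \det (schur A).
Proof.
move=> a_neq0; pose A1 : 'M[R]_(1 + n) := A.
have ul_a : ulsubmx A1 = (A ord0 ord0)%:M by rewrite [LHS]mx11_scalar !mxE lshift0.
have A_fact : A1 = block_mx 1 0 ((A ord0 ord0)^-1 *: dlsubmx A1) 1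
                   *m block_mx (ulsubmx A1) (ursubmx A1) 0 (schur A).
  rewrite mulmx_block !mul1mx !mul0mx !addr0 -!scalemxAl ul_a mul_mx_scalar.
  by rewrite scalerA mulVf // scale1r /schur addrC subrK -ul_a submxK.
rewrite -[\det A]/(\det A1) A_fact det_mulmx (@det_lblock _ 1) (@det_ublock _ 1).
by rewrite !det1 !mul1r ul_a det_scalar1.
Qed.

Lemma schur_update_ge0 n (A : 'M[R]_n.+1) i j : dominant_Zmx A ->
  0 <= (A ord0 ord0)^-1 * (A (lift ord0 i) ord0 * A ord0 (lift ord0 j)).
Proof.
move=> A_dom; have [A_off _] := A_dom.
by rewrite mulr_ge0 ?invr_ge0 ?dominant_Zmx_diag_ge0 // mulr_le0 // A_off //
  ?neq_lift // eq_sym neq_lift.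
Qed.

Lemma schur_diag_le n (A : 'M[R]_n.+1) i :
  dominant_Zmx A -> schur A i i <= A (lift ord0 i) (lift ord0 i).
Proof. by move=> A_dom; rewrite schurE gerBl schur_update_ge0. Qed.

Lemma dominant_Zmx_schur n (A : 'M[R]_n.+1) :
  dominant_Zmx A -> A ord0 ord0 != 0 -> dominant_Zmx (schur A).
Proof.
move=> A_dom a_neq0; have [A_off A_row] := A_dom.
have a_gt0 : 0 < A ord0 ord0 by rewrite lt_def a_neq0 dominant_Zmx_diag_ge0.
split=> [i j ij | i].
  rewrite schurE; have := schur_update_ge0 i j A_dom.
  have : A (lift ord0 i) (lift ord0 j) <= 0.
    by apply: A_off; rewrite (inj_eq lift_inj).
  lra.
(* Row [i] of the Schur complement sums to row [lift 0 i] of [A] minus a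
   nonnegative multiple of row [0]. *)
have -> : \sum_j schur A i j = \sum_j A (lift ord0 i) j
    - (A ord0 ord0)^-1 * A (lift ord0 i) ord0 * \sum_j A ord0 j.
  under eq_bigr do rewrite schurE.
  rewrite sumrB -!mulr_sumr !big_ord_recl; field; exact: a_neq0.
have : 0 <= - ((A ord0 ord0)^-1 * A (lift ord0 i) ord0) * \sum_j A ord0 j.
  by rewrite mulr_ge0 // oppr_ge0 mulr_ge0_le0 ?invr_ge0 ?(ltW a_gt0) // A_off
    // eq_sym neq_lift.
have := A_row (lift ord0 i); lra.
Qed.

Lemma dominant_Zmx_det_bounds n (A : 'M[R]_n) :
  dominant_Zmx A -> 0 <= \det A <= \prod_i A i i.
Proof.
elim: n A => [|n IHn] A A_dom; first by rewrite det_mx00 big_ord0 lexx ler01.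
have prod_ge0 : 0 <= \prod_i A i i.
  by apply: prodr_ge0 => i _; apply: dominant_Zmx_diag_ge0.
have [a0|a_neq0] := eqVneq (A ord0 ord0) 0.
  rewrite (expand_det_row _ ord0) big1 ?lexx ?prod_ge0 // => j _.
  by rewrite (dominant_Zmx_row_eq0 j A_dom a0) mul0r.
have S_dom := dominant_Zmx_schur A_dom a_neq0.
have /andP[detS_ge0 detS_le] := IHn _ S_dom.
have a_ge0 := dominant_Zmx_diag_ge0 ord0 A_dom.
rewrite det_schur // big_ord_recl mulr_ge0 //= ler_wpM2l //.
apply: le_trans detS_le _; apply: ler_prod => i _.
by rewrite schur_diag_le // dominant_Zmx_diag_ge0.
Qed.

End DominantZmatrix.

Section MaximumPrinciple.
Variables (T : finType) (f1 f2 : T -> T) (r : T).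

(* Every walk stepping from [i != r] to [f1 i] or [f2 i] eventually hits [r]. *)
Definition inevitable := forall X : {set T}, X != set0 ->
  {in X, forall i, i != r -> (f1 i \in X) && (f2 i \in X)} -> r \in X.

Hypothesis f_inev : inevitable.
Variables (R : realDomainType) (z : T -> R).
Hypothesis z_r : z r = 0.
Hypothesis z_mean : forall i, i != r -> z i *+ 2 = z (f1 i) + z (f2 i).

Lemma inevitable_mean_le0 j : z j <= 0.
Proof.
have [imax _ z_max] := @arg_maxP _ _ _ r xpredT z isT.
have : r \in [set i | z i == z imax].
  apply: f_inev => [|i]; first by apply/set0Pn; exists imax; rewrite inE.
  rewrite !inE => /eqP zi ir; have := z_mean ir; rewrite zi mulr2n => mean.
  have le1 : z (f1 i) <= z imax := z_max _ isT.
  have le2 : z (f2 i) <= z imax := z_max _ isT.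
  by apply/andP; split; apply/eqP; lra.
rewrite inE z_r => /eqP z_imax.
by have : z j <= z imax := z_max _ isT; lra.
Qed.

End MaximumPrinciple.

Lemma inevitable_mean_eq0 (T : finType) (f1 f2 : T -> T) (r : T)
    (R : realDomainType) (z : T -> R) :
  inevitable f1 f2 r -> z r = 0 ->
  (forall i, i != r -> z i *+ 2 = z (f1 i) + z (f2 i)) -> forall j, z j = 0.
Proof.
move=> f_inev z_r z_mean j; apply/eqP; rewrite eq_le.
rewrite (inevitable_mean_le0 f_inev z_r z_mean) /= -oppr_le0.
apply: (inevitable_mean_le0 f_inev (z := fun i => - z i)).
  by rewrite z_r oppr0.
by move=> i ir; rewrite mulNrn z_mean // opprD.
Qed.

Lemma mulrz_det_kernel m (M : 'M[int]_m) (V : zmodType) (y : 'I_m -> V) :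
  (forall i, \sum_j y j *~ M i j = 0) -> forall k, y k *~ \det M = 0.
Proof.
move=> y_ker k.
have : \sum_i (\sum_j y j *~ M i j) *~ \adj M k i = 0.
  by rewrite big1 // => i _; rewrite y_ker mul0rz.
under eq_bigr do rewrite mulrz_suml.
rewrite exchange_big /=.
under eq_bigr do under eq_bigr do rewrite -mulrzA.
under eq_bigr do rewrite -mulrz_sumr.
have adjE j : \sum_i M i j * \adj M k i = (\det M)%:M k j.
  by rewrite -mul_adj_mx mxE; apply: eq_bigr => i _; rewrite mulrC.
under eq_bigr do rewrite adjE mxE.
rewrite (bigD1 k) //= eqxx big1 ?addr0 // => j /negbTE.
by rewrite eq_sym => ->; rewrite mulr0n mulr0z.
Qed.

Section BalanceMatrix.
Variables (m : nat) (f1 f2 : 'I_m -> 'I_m) (r : 'I_m).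

Definition balance_mx : 'M[int]_m := \matrix_(i, j)
  if i == r then (i == j)%:Z
  else (i == j)%:Z *+ 2 - (f1 i == j)%:Z - (f2 i == j)%:Z.

Lemma sum_mulrz_delta (V : zmodType) (x : 'I_m -> V) k :
  \sum_j x j *~ (k == j)%:Z = x k.
Proof.
rewrite (bigD1 k) //= eqxx big1 ?addr0 // => j /negbTE.
by rewrite eq_sym => ->.
Qed.

Lemma balance_mx_sumE (V : zmodType) (x : 'I_m -> V) i :
  \sum_j x j *~ balance_mx i j =
  if i == r then x i else x i *+ 2 - x (f1 i) - x (f2 i).
Proof.
under eq_bigr do rewrite mxE.
case: eqP => _; first exact: sum_mulrz_delta.
under eq_bigr do rewrite mulr2n !mulrzBr mulrzDr.
by rewrite !sumrB big_split /= !sum_mulrz_delta mulr2n.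
Qed.

Lemma balance_mx_diag_le i : balance_mx i i <= if i == r then 1 else 2.
Proof.
by rewrite mxE eqxx; case: ifP => _ //; case: (f1 i == i); case: (f2 i == i).
Qed.

Lemma balance_mx_dominant (R : realFieldType) :
  dominant_Zmx (map_mx (intr : int -> R) balance_mx).
Proof.
split=> [i j ij | i].
  rewrite mxE lerz0 mxE (negbTE ij) mul0rn sub0r; case: ifP => _ //.
  by rewrite -opprD oppr_le0 addr_ge0.
rewrite (eq_bigr (fun j => 1 *~ balance_mx i j)) => [|j _]; last by rewrite mxE.
by rewrite balance_mx_sumE; case: ifP => _; lra.
Qed.

Hypothesis f_inev : inevitable f1 f2 r.

Lemma balance_mx_kernel_eq0 (R : realDomainType) (z : 'I_m -> R) :
  (forall i, \sum_j z j *~ balance_mx i j = 0) -> forall j, z j = 0.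
Proof.
move=> z_ker; apply: (inevitable_mean_eq0 f_inev).
  by have := z_ker r; rewrite balance_mx_sumE eqxx.
move=> i ir; apply/eqP; rewrite -subr_eq0 opprD addrA.
by have := z_ker i; rewrite balance_mx_sumE (negbTE ir) => ->.
Qed.

Lemma balance_mx_det_neq0 : \det balance_mx != 0.
Proof.
rewrite -(inj_eq (@intr_inj rat)) rmorph0 -det_map_mx -det_tr.
apply/det0P => -[v v_neq0 v_ker]; case/negP: v_neq0; apply/eqP/rowP => j.
rewrite mxE; apply: (balance_mx_kernel_eq0 (z := fun j => v 0 j)) => i.
have := congr1 (fun w : 'rV_m => w 0 i) v_ker; rewrite !mxE => v_ker_i.
by rewrite -[RHS]v_ker_i; apply: eq_bigr => k _; rewrite !mxE mulrzr.
Qed.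

Lemma balance_mx_det_bounds : 0 < \det balance_mx <= 2 ^+ m.-1.
Proof.
pose D := map_mx (intr : int -> rat) balance_mx.
have /andP [detD_ge0 detD_le] := dominant_Zmx_det_bounds (balance_mx_dominant rat).
have D_diag_le i : D i i <= if i == r then 1 else 2.
  rewrite mxE; have := balance_mx_diag_le i.
  by case: ifP => _; rewrite -(@ler_int rat).
have prod_le : \prod_i D i i <= 2 ^+ m.-1.
  have diag_ge0 i : 0 <= D i i.
    exact: dominant_Zmx_diag_ge0 (balance_mx_dominant rat).
  have -> : m.-1 = #|[pred i | i != r]| by rewrite cardC1 card_ord.
  rewrite (bigD1 r) //= -[2 ^+ _]mul1r -prodr_const.
  rewrite ler_pM ?prodr_ge0 //; first by have := D_diag_le r; rewrite eqxx.
  by apply: ler_prod => i /negbTE ir; have := D_diag_le i; rewrite ir diag_ge0.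
rewrite -(@ltr_int rat) -(@ler_int rat) rmorphXn mulr0z -det_map_mx.
by rewrite lt_def detD_ge0 (le_trans detD_le prod_le) det_map_mx intr_eq0
  balance_mx_det_neq0.
Qed.

End BalanceMatrix.

Section Balanced.
Variable G : finZmodType.

Lemma pdiv_card_le_annihilator (g : G) (n : nat) :
  g != 0 -> (0 < n)%N -> g *+ n = 0 -> (pdiv #|G| <= n)%N.
Proof.
move=> g_neq0 n_gt0 gn0.
have order_g_gt1 : (1 < #[g]%g)%N by rewrite order_gt1.
apply: leq_trans (pdiv_min_dvd order_g_gt1 _) (dvdn_leq n_gt0 _).
  by rewrite -cardsT order_dvdG ?inE.
by rewrite order_dvdn; apply/eqP.
Qed.

Definition balancedb (B : {set G}) :=
  [forall b in B, [exists b1 in B, [exists b2 in B,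
     (b1 != b2) && (b *+ 2 == b1 + b2)]]].

Lemma balancedP B : reflect (balanced B) (balancedb B).
Proof.
apply: (iffP forall_inP) => [B_bal b bB | B_bal b bB].
  have /exists_inP [b1 b1B /exists_inP [b2 b2B /andP [b12 /eqP e]]] := B_bal b bB.
  by exists b1, b2.
have [b1 [b2 [b1B b2B b12 e]]] := B_bal b bB.
apply/exists_inP; exists b1 => //; apply/exists_inP; exists b2 => //.
by rewrite b12 e eqxx.
Qed.

Lemma balanced_choice B : balanced B -> exists f1 f2 : G -> G,
  {in B, forall b,
    [/\ f1 b \in B, f2 b \in B, f1 b != f2 b & b *+ 2 = f1 b + f2 b]}.
Proof.
move=> B_bal.
have : forall b, exists pr : G * G, b \in B ->
    [/\ pr.1 \in B, pr.2 \in B, pr.1 != pr.2 & b *+ 2 = pr.1 + pr.2].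
  move=> b; have [bB|_] := boolP (b \in B); last by exists (b, b).
  by have [b1 [b2 ?]] := B_bal b bB; exists (b1, b2).
by case/fin_all_exists => f f_bal; exists (fst \o f), (snd \o f).
Qed.

End Balanced.

Section MinimalBalanced.
Variables (G : finZmodType) (S : {set G}) (r : G) (f1 f2 : G -> G).
Hypothesis rS : r \in S.
Hypothesis f_bal : {in S, forall b,
  [/\ f1 b \in S, f2 b \in S, f1 b != f2 b & b *+ 2 = f1 b + f2 b]}.
Hypothesis S_min :
  forall X : {set G}, X \subset S -> X != set0 -> balanced X -> X = S.

Let ev (i : 'I_#|S|) : G := enum_val i.
Let rk := enum_rank_in rS.
Let F1 i := rk (f1 (ev i)).
Let F2 i := rk (f2 (ev i)).

Let ev_in i : ev i \in S. Proof. exact: enum_valP. Qed.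
Let ev_rk x : x \in S -> ev (rk x) = x. Proof. exact: enum_rankK_in. Qed.
Let ev_F1 i : ev (F1 i) = f1 (ev i).
Proof. by have [? _ _ _] := f_bal (ev_in i); rewrite ev_rk. Qed.
Let ev_F2 i : ev (F2 i) = f2 (ev i).
Proof. by have [_ ? _ _] := f_bal (ev_in i); rewrite ev_rk. Qed.

Lemma minimal_balanced_inevitable : inevitable F1 F2 (rk r).
Proof.
move=> X X_n0 X_cl; apply/negPn/negP => rX.
have evX_S : ev @: X = S.
  apply: S_min; first by apply/subsetP => _ /imsetP [i _ ->].
    by rewrite imset_eq0.
  move=> _ /imsetP [i iX ->]; have ir : i != rk r by apply: contraNneq rX => <-.
  have /andP [F1X F2X] := X_cl i iX ir; have [_ _ f12 e] := f_bal (ev_in i).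
  by exists (ev (F1 i)), (ev (F2 i)); rewrite !imset_f // ev_F1 ev_F2.
have := rS; rewrite -evX_S => /imsetP [j jX rj].
by move: rX; rewrite rj /rk enum_valK_in jX.
Qed.

Lemma minimal_balanced_kernel i :
  \sum_j (ev j - r) *~ balance_mx F1 F2 (rk r) i j = 0.
Proof.
rewrite balance_mx_sumE; case: eqP => [->|_]; first by rewrite ev_rk // subrr.
have [_ _ _ e] := f_bal (ev_in i).
by rewrite ev_F1 ev_F2 mulrnBl e mulr2n -addrA -opprD addrACA -opprD subrr.
Qed.

Lemma minimal_balanced_pdiv_le : (pdiv #|G| <= 2 ^ #|S|.-1)%N.
Proof.
have [s sS sr] : exists2 s, s \in S & s != r.
  have [f1S f2S f12 _] := f_bal rS.
  have [f1r|] := eqVneq (f1 r) r; last by exists (f1 r).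
  by exists (f2 r); rewrite // -{2}f1r eq_sym.
have /andP [det_gt0 det_le] := balance_mx_det_bounds minimal_balanced_inevitable.
have := mulrz_det_kernel minimal_balanced_kernel (rk s).
rewrite ev_rk // -(gez0_abs (ltW det_gt0)) -pmulrn => s_ann.
apply: leq_trans (pdiv_card_le_annihilator _ _ s_ann) _.
- by rewrite subr_eq0.
- by rewrite absz_gt0 gt_eqF.
by rewrite -lez_nat gez0_abs ?(ltW det_gt0) // -natz natrX; exact: det_le.
Qed.

End MinimalBalanced.

Lemma balanced_pdiv_le (G : finZmodType) (B : {set G}) :
  B != set0 -> balanced B -> (pdiv #|G| <= 2 ^ #|B|.-1)%N.
Proof.
move=> B_n0 /balancedP B_bal.
pose nonempty_balanced := [pred X : {set G} | (X != set0) && balancedb X].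
have B_nb : nonempty_balanced B by rewrite /= B_n0.
have [S /minsetP [/andP [S_n0 /balancedP S_bal] S_min] SB] := minset_exists B_nb.
have /set0Pn [r rS] := S_n0.
have [f1 [f2 f_bal]] := balanced_choice S_bal.
apply: leq_trans (minimal_balanced_pdiv_le rS f_bal _) _.
  by move=> X XS X_n0 /balancedP X_bal; apply: S_min; rewrite //= X_n0.
by rewrite leq_pexp2l // -!subn1 leq_sub2r // subset_leq_card.
Qed.

(* Importing Reals rebinds the [%R] key and nat's [^] (to [Nat.pow]): hence
   its late import and the explicit [expn] below. *)
Local Close Scope ring_scope.
From Stdlib Require Import Reals.

Lemma log2_le (p k : nat) :
  (0 < p)%N -> (p <= expn 2 k)%N -> (log2 (INR p) <= INR k)%R.
Proof.
move=> p_gt0 p_le.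
have ln2_gt0 : (0 < ln 2)%R.
  by apply: Rlt_trans ln_lt_2; apply: Rinv_0_lt_compat; apply: Rlt_0_2.
have INR_p_gt0 : (0 < INR p)%R by apply: lt_0_INR; apply/ssrnat.ltP.
have INR_p_le : (INR p <= 2 ^ k)%R.
  have expn_pow : expn 2 k = Nat.pow 2 k.
    by elim: k {p_le} => // k IHk; rewrite expnS IHk.
  by rewrite -[2%R]/(INR 2) -pow_INR -expn_pow; apply: le_INR; apply/ssrnat.leP.
rewrite /log2; apply: (Rmult_le_reg_r (ln 2)) => //.
rewrite /Rdiv Rmult_assoc Rinv_l ?Rmult_1_r; last exact: Rgt_not_eq.
rewrite -ln_pow; last exact: Rlt_0_2.
case: (Rle_lt_or_eq_dec _ _ INR_p_le) => [lt_p|->]; last exact: Rle_refl.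
by apply: Rlt_le; apply: ln_increasing.
Qed.

Theorem corollary4p8 (G : finZmodType) (B : {set G}) :
  (1 < #|G|)%N -> B != set0 -> balanced B ->
  (log2 (INR (pdiv #|G|)) + 1 <= INR #|B|)%R.
Proof.
move=> _ B_n0 B_bal; have := balanced_pdiv_le B_n0 B_bal.
have := card_gt0 B; rewrite B_n0; case: #|B| => // k _ pdiv_le.
by rewrite S_INR; apply: Rplus_le_compat_r; apply: log2_le (pdiv_gt0 _) pdiv_le.
Qed.
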